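(* Let $f:(0,\infty)\to(0,\infty)$ be non-increasing such that $t\mapsto t^2f(t)$ is non-decreasing, let $a\ge0$, $c>0$, and define \[ F(r):=\int_0^\infty t^{-a}e^{-\frac{r^2}{c^2t}}f(t)\,dt,\qquad r>0. \] If $a\le1$, assume additionally that there exist constants $c'>0$, $\gamma'>1-a$ and $R\ge0$ such that $\frac{f(tx)}{f(t)}\le c'x^{-\gamma'}$ for all $t>R$ and $x\ge1$. Then \[ F(r)\asymp r^{-2a+2}f(r^2)\quad\text{for all } r>R_0, \] where $R_0:=\sqrt R$ if $a\le1$ and $R_0:=0$ if $a>1$.
   Context: $g(r)\asymp h(r)$ for $r\in I$ means that $g(r)/h(r)$ stays between two positive constants (independent of $r$) for all $r\in I$. *)

From Stdlib Require Import Reals.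
Open Scope R_scope.

Definition improper_integral_0_inf (g : R -> R) (l : R) : Prop :=
  forall eps, 0 < eps ->
    exists d N, 0 < d /\
      forall x y, 0 < x -> x <= d -> N <= y -> x <= y ->
        exists pr : Riemann_integrable g x y, Rabs (RiemannInt pr - l) < eps.

Definition integrandA2 (f : R -> R) (a c r : R) (t : R) : R :=
  Rpower t (- a) * exp (- (r ^ 2) / (c ^ 2 * t)) * f t.

From Coquelicot Require Import Coquelicot.
From Stdlib Require Import Reals Lra ClassicalEpsilon Classical.
Open Scope R_scope.

(* The integrand is nonnegative and, as a continuous function times a
   nonincreasing one, Riemann integrable on compact subintervals of (0,oo);
   so F(r) exists once its partial integrals are bounded.  With s = r^2:
   - on [s,2s] the integrand is >= (2s)^(-a) exp(-1/c^2) f(s)/4, because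
     t^2 f(t) is nondecreasing; this gives F(r) >= C1 s^(1-a) f(s);
   - on (0,s], u^m e^(-u) <= m^m (m = a+2, u = s/(c^2 t)) together with
     t^2 f(t) <= s^2 f(s) bounds the integrand by K s^(-a) f(s);
   - on [s,oo), a power tail t^(-a) f(t) <= A f(s) s^(b-a) t^(-b) with b > 1
     bounds the integral by A/(b-1) s^(1-a) f(s).  Such a tail holds with
     b = a if a > 1 (f nonincreasing), and with b = a + gamma' if a <= 1
     and s > R (decay hypothesis). *)

(* A function uniformly approximable on [a,b] by integrable functions is
   Riemann integrable: an e-approximation plus a step-function enclosure of
   the approximant gives a step-function enclosure of the function. *)
Lemma Riemann_integrable_uniform_limit (g : R -> R) a b : a <= b ->
  (forall e, 0 < e -> exists h, ex_RInt h a b /\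
      forall t, a <= t <= b -> Rabs (g t - h t) <= e) ->
  Riemann_integrable g a b.
Proof.
  intros hab happrox eps.
  set (e := eps / (2 * (b - a + 1))).
  assert (he : 0 < e).
  { unfold e. apply Rdiv_lt_0_compat; [destruct eps; simpl; lra | lra]. }
  destruct (constructive_indefinite_description _ (happrox e he))
    as [h [hint hclose]].
  apply ex_RInt_Reals_0 in hint.
  assert (heps2 : 0 < eps / 2) by (destruct eps; simpl; lra).
  destruct (hint (mkposreal _ heps2)) as [phi [psi [hphi hpsi]]].
  exists phi, (mkStepFun (StepFun_P28 1 psi (mkStepFun (StepFun_P4 a b e)))).
  split.
  - intros t ht. simpl. unfold fct_cte.
    rewrite Rmin_left, Rmax_right in ht, hphi by lra.
    specialize (hphi t ht). specialize (hclose t ht).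
    replace (g t - phi t) with ((g t - h t) + (h t - phi t)) by ring.
    eapply Rle_trans; [apply Rabs_triang | lra].
  - rewrite StepFun_P30. simpl in hpsi |- *. rewrite StepFun_P18.
    assert (e * (b - a) <= eps / 2).
    { apply Rle_trans with (e * (b - a + 1)).
      - apply Rmult_le_compat_l; lra.
      - unfold e. right; field. lra. }
    assert (0 <= e * (b - a)) by (apply Rmult_le_pos; lra).
    eapply Rle_lt_trans; [apply Rabs_triang |].
    rewrite Rmult_1_l, (Rabs_right (e * (b - a))) by lra. lra.
Qed.

Definition superlevel_indicator (h : R -> R) (c t : R) : R :=
  if Rle_dec c (h t) then 1 else 0.

(* For h nonincreasing on [x,y], {c <= h} is an initial segment of [x,y],
   whose endpoint p is a supremum; so u times the indicator is u on (x,p)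
   and 0 on (p,y), and is integrable when u is continuous. *)
Lemma ex_RInt_mul_superlevel_indicator (u h : R -> R) x y c : x <= y ->
  (forall t, x <= t <= y -> continuous u t) ->
  (forall s t, x <= s -> s <= t -> t <= y -> h t <= h s) ->
  ex_RInt (fun t => u t * superlevel_indicator h c t) x y.
Proof.
  intros hxy hu hh. unfold superlevel_indicator.
  set (E := fun z => x <= z <= y /\ c <= h z).
  destruct (classic (exists t, E t)) as [[t0 Et0] | hempty].
  - assert (hbound : bound E) by (exists y; intros z [hz _]; lra).
    destruct (completeness E hbound (ex_intro _ t0 Et0)) as [p [hub hlub]].
    assert (hxp : x <= p) by (apply Rle_trans with t0; [apply Et0 | now apply hub]).
    assert (hpy : p <= y) by (apply hlub; intros z [hz _]; lra).
    apply ex_RInt_Chasles_0 with p; [lra | |].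
    + apply ex_RInt_ext with u.
      * intros t ht. rewrite Rmin_left, Rmax_right in ht by lra.
        assert (hbeyond : exists z, E z /\ t < z).
        { apply NNPP. intros hno. assert (p <= t); [|lra].
          apply hlub. intros z Ez. destruct (Rle_lt_dec z t); auto.
          exfalso; eauto. }
        destruct hbeyond as [z [[hz hcz] htz]].
        destruct (Rle_dec c (h t)) as [_ | hlt]; [now rewrite Rmult_1_r |].
        exfalso. apply hlt, Rle_trans with (h z); [exact hcz | apply hh; lra].
      * apply (ex_RInt_continuous (V := R_CompleteNormedModule)).
        intros z hz. rewrite Rmin_left, Rmax_right in hz by lra. apply hu; lra.
    + apply ex_RInt_ext with (fun _ => 0); [| apply ex_RInt_const].
      intros t ht. rewrite Rmin_left, Rmax_right in ht by lra.
      destruct (Rle_dec c (h t)) as [hct | _]; [| now rewrite Rmult_0_r].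
      assert (t <= p) by (apply hub; split; [lra | exact hct]). lra.
  - apply ex_RInt_ext with (fun _ => 0); [| apply ex_RInt_const].
    intros t ht. rewrite Rmin_left, Rmax_right in ht by lra.
    destruct (Rle_dec c (h t)) as [hct | _]; [| now rewrite Rmult_0_r].
    exfalso. apply hempty. exists t. split; [lra | exact hct].
Qed.

(* Induction on N, peeling off the
   top level {h >= e} and recursing on max(h - e, 0). *)
Lemma staircase_approximation (u : R -> R) x y e : x <= y -> 0 < e ->
  (forall t, x <= t <= y -> continuous u t) ->
  forall (N : nat) (h : R -> R),
  (forall s t, x <= s -> s <= t -> t <= y -> h t <= h s) ->
  (forall t, x <= t <= y -> 0 <= h t <= INR N * e) ->
  exists w, ex_RInt (fun t => u t * w t) x y /\
    forall t, x <= t <= y -> 0 <= w t <= h t /\ h t <= w t + e.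
Proof.
  intros hxy he hu N. induction N as [| N IH]; intros h hh hrange.
  - exists (fun _ => 0). split.
    + apply ex_RInt_ext with (fun _ => 0); [| apply ex_RInt_const].
      intros t _. now rewrite Rmult_0_r.
    + intros t ht. specialize (hrange t ht). simpl in hrange. lra.
  - destruct (IH (fun t => Rmax (h t - e) 0)) as [w [hwint hw]].
    + intros s t hs hst ht. apply Rle_max_compat_r.
      specialize (hh s t hs hst ht). lra.
    + intros t ht. specialize (hrange t ht). rewrite S_INR in hrange.
      split; [apply Rmax_r |].
      apply Rmax_lub; [lra | apply Rmult_le_pos; [apply pos_INR | lra]].
    + exists (fun t => w t + e * superlevel_indicator h e t). split.
      * apply (ex_RInt_ext (V := R_NormedModule)) with (fun t => plus (u t * w t)
          (scal e (u t * superlevel_indicator h e t))).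
        { intros t _. unfold plus, scal; simpl. unfold mult; simpl.
          change (u t * w t + e * (u t * superlevel_indicator h e t) =
                  u t * (w t + e * superlevel_indicator h e t)). ring. }
        apply (ex_RInt_plus (V := R_NormedModule)); [exact hwint |].
        apply (ex_RInt_scal (V := R_NormedModule)).
        now apply ex_RInt_mul_superlevel_indicator.
      * intros t ht. specialize (hw t ht). specialize (hrange t ht).
        unfold superlevel_indicator.
        destruct (Rle_dec e (h t)).
        -- rewrite Rmax_left in hw by lra. lra.
        -- rewrite Rmax_right in hw by lra. lra.
Qed.

(* Product of a continuous function and a nonnegative nonincreasing one is
   Riemann integrable: staircase approximations of f with step e / M (M a
   bound of |u|) give uniform e-approximations of u f. *)
Lemma Riemann_integrable_mul_nonincreasing (u f : R -> R) x y : x <= y ->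
  (forall t, x <= t <= y -> continuous u t) ->
  (forall s t, x <= s -> s <= t -> t <= y -> f t <= f s) ->
  (forall t, x <= t <= y -> 0 <= f t) ->
  Riemann_integrable (fun t => u t * f t) x y.
Proof.
  intros hxy hu hf hf0. apply Riemann_integrable_uniform_limit; [exact hxy |].
  intros e he.
  assert (huint : ex_RInt u x y).
  { apply (ex_RInt_continuous (V := R_CompleteNormedModule)).
    intros z hz. rewrite Rmin_left, Rmax_right in hz by lra. apply hu; lra. }
  destruct (ex_RInt_ub u x y huint) as [M0 hM0].
  set (M := Rabs M0 + 1).
  assert (hM : 0 < M) by (unfold M; pose proof (Rabs_pos M0); lra).
  set (step := e / M).
  assert (hstep : 0 < step) by (unfold step; apply Rdiv_lt_0_compat; lra).
  destruct (INR_unbounded (f x / step)) as [N hN].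
  destruct (staircase_approximation u x y step hxy hstep hu N f hf)
    as [w [hwint hw]].
  { intros t ht. split; [now apply hf0 |].
    apply Rle_trans with (f x); [apply hf; lra |].
    apply Rle_trans with (f x / step * step); [right; field; lra |].
    apply Rmult_le_compat_r; lra. }
  exists (fun t => u t * w t). split; [exact hwint |].
  intros t ht. specialize (hw t ht).
  specialize (hM0 t). rewrite Rmin_left, Rmax_right in hM0 by lra.
  specialize (hM0 ht). change (norm (u t)) with (Rabs (u t)) in hM0.
  replace (u t * f t - u t * w t) with (u t * (f t - w t)) by ring.
  rewrite Rabs_mult, (Rabs_right (f t - w t)) by lra.
  apply Rle_trans with (M * step).
  - apply Rmult_le_compat; try lra; [apply Rabs_pos |].
    unfold M. pose proof (Rle_abs M0). lra.
  - unfold step. right; field; lra.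
Qed.


Lemma RInt_nonneg_subinterval (g : R -> R) x' x y y' :
  (forall x y, 0 < x -> x <= y -> ex_RInt g x y) ->
  (forall t, 0 < t -> 0 <= g t) ->
  0 < x' -> x' <= x -> x <= y -> y <= y' -> RInt g x y <= RInt g x' y'.
Proof.
  intros hint hg h1 h2 h3 h4.
  rewrite <- (RInt_Chasles g x' x y') by (apply hint; lra).
  rewrite <- (RInt_Chasles g x y y') by (apply hint; lra).
  assert (0 <= RInt g x' x)
    by (apply RInt_ge_0; [lra | apply hint; lra | intros; apply hg; lra]).
  assert (0 <= RInt g y y')
    by (apply RInt_ge_0; [lra | apply hint; lra | intros; apply hg; lra]).
  change (plus (RInt g x' x) (plus (RInt g x y) (RInt g y y'))) with
    (RInt g x' x + (RInt g x y + RInt g y y')). lra.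
Qed.

(* A nonnegative function, integrable on compact subintervals of (0,oo),
   whose partial integrals are bounded by B has an improper integral on
   (0,oo): the supremum I of the partial integrals, with I <= B. *)
Lemma improper_integral_of_bounded_nonneg (g : R -> R) (B : R) :
  (forall x y, 0 < x -> x <= y -> ex_RInt g x y) ->
  (forall t, 0 < t -> 0 <= g t) ->
  (forall x y, 0 < x -> x <= y -> RInt g x y <= B) ->
  exists I, improper_integral_0_inf g I /\
    (forall x y, 0 < x -> x <= y -> RInt g x y <= I) /\ I <= B.
Proof.
  intros hint hg hB.
  set (E := fun z => exists x y, 0 < x /\ x <= y /\ z = RInt g x y).
  assert (hbound : bound E).
  { exists B. intros z [x [y [hx [hxy ->]]]]. now apply hB. }
  assert (hne : exists z, E z) by (exists (RInt g 1 1), 1, 1; split; lra).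
  destruct (completeness E hbound hne) as [I [hub hlub]].
  assert (hle : forall x y, 0 < x -> x <= y -> RInt g x y <= I).
  { intros x y hx hxy. apply hub. now exists x, y. }
  exists I. split; [| split; [exact hle |]].
  - intros eps heps.
    assert (hnear : exists x y, 0 < x /\ x <= y /\ I - eps < RInt g x y).
    { apply NNPP. intros hno. assert (I <= I - eps); [| lra].
      apply hlub. intros z [x [y [hx [hxy ->]]]].
      destruct (Rle_lt_dec (RInt g x y) (I - eps)); auto.
      exfalso; apply hno; eauto. }
    destruct hnear as [x0 [y0 [hx0 [hxy0 hclose]]]].
    exists x0, y0. split; [exact hx0 |]. intros x y hx hxd hy hxy.
    exists (ex_RInt_Reals_0 g x y (hint x y hx hxy)). rewrite <- RInt_Reals.
    assert (RInt g x0 y0 <= RInt g x y)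
      by (apply RInt_nonneg_subinterval; auto; lra).
    assert (RInt g x y <= I) by now apply hle.
    apply Rabs_def1; lra.
  - apply hlub. intros z [x [y [hx [hxy ->]]]]. now apply hB.
Qed.

Lemma exp_monotone x y : x <= y -> exp x <= exp y.
Proof. intros [hlt | ->]; [left; now apply exp_increasing | lra]. Qed.

Lemma Rpower_pos x y : 0 < Rpower x y.
Proof. apply exp_pos. Qed.

(* u^m e^(-u) <= m^m for u, m > 0, in logarithmic form; it follows from
   ln(u/m) <= u/m - 1. *)
Lemma log_pow_mul_exp_neg_le m u : 0 < m -> 0 < u -> m * ln u - u <= m * ln m.
Proof.
  intros hm hu.
  assert (hlog : ln (u / m) <= u / m - 1).
  { pose proof (exp_ineq1_le (ln (u / m))) as h.
    rewrite exp_ln in h by (now apply Rdiv_lt_0_compat). lra. }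
  rewrite ln_div in hlog by assumption.
  assert (m * (ln u - ln m) <= m * (u / m - 1)) by (apply Rmult_le_compat_l; lra).
  replace (m * (u / m - 1)) with (u - m) in * by (field; lra). lra.
Qed.

Lemma is_RInt_Rpower_neg b s y : 1 < b -> 0 < s -> s <= y ->
  is_RInt (fun t => Rpower t (-b)) s y
    (/ (1 - b) * Rpower y (1 - b) - / (1 - b) * Rpower s (1 - b)).
Proof.
  intros hb hs hy.
  assert (hderiv : forall t, 0 < t ->
    is_derive (fun t => / (1 - b) * Rpower t (1 - b)) t (Rpower t (-b))).
  { intros t ht.
    replace (Rpower t (-b)) with (/ (1 - b) * ((1 - b) * Rpower t (1 - b - 1)))
      by (replace (1 - b - 1) with (-b) by ring; field; lra).
    apply is_derive_scal, is_derive_Reals, derivable_pt_lim_power, ht. }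
  apply (is_RInt_derive (V := R_CompleteNormedModule)
           (fun t => / (1 - b) * Rpower t (1 - b))).
  - intros t ht. rewrite Rmin_left in ht by lra. apply hderiv. lra.
  - intros t ht. rewrite Rmin_left in ht by lra.
    apply (ex_derive_continuous (K := R_AbsRing) (V := R_NormedModule)).
    exists (- b * Rpower t (- b - 1)).
    apply is_derive_Reals, derivable_pt_lim_power. lra.
Qed.

Lemma RInt_Rpower_neg_le b s y : 1 < b -> 0 < s -> s <= y ->
  RInt (fun t => Rpower t (-b)) s y <= Rpower s (1 - b) / (b - 1).
Proof.
  intros hb hs hy.
  rewrite (is_RInt_unique _ _ _ _ (is_RInt_Rpower_neg b s y hb hs hy)).
  pose proof (Rpower_pos y (1 - b)).
  replace (/ (1 - b) * Rpower y (1 - b) - / (1 - b) * Rpower s (1 - b))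
    with ((Rpower s (1 - b) - Rpower y (1 - b)) / (b - 1)) by (field; lra).
  apply Rmult_le_compat_r; [left; apply Rinv_0_lt_compat |]; lra.
Qed.

Lemma Rpower_succ s a : 0 < s -> s * Rpower s (-a) = Rpower s (1 - a).
Proof. intros hs. unfold Rminus. rewrite Rpower_plus, Rpower_1 by auto. ring. Qed.

Lemma Rpower_sqr r a : 0 < r -> Rpower (r ^ 2) (1 - a) = Rpower r (- 2 * a + 2).
Proof.
  intros hr. rewrite <- (Rpower_pow 2 r), Rpower_mult by auto.
  f_equal. simpl. ring.
Qed.

Definition kernelA2 (a c r t : R) : R := Rpower t (- a) * exp (- (r ^ 2) / (c ^ 2 * t)).

Lemma integrandA2_kernel f a c r t : integrandA2 f a c r t = kernelA2 a c r t * f t.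
Proof. reflexivity. Qed.

Lemma kernelA2_continuous a c r t : 0 < c -> 0 < t -> continuous (kernelA2 a c r) t.
Proof.
  intros hc ht. unfold kernelA2, Rpower.
  apply (ex_derive_continuous (K := R_AbsRing) (V := R_NormedModule)).
  auto_derive. repeat split; auto.
  assert (0 < c * (c * 1) * t) by (repeat apply Rmult_lt_0_compat; lra). lra.
Qed.

Definition left_const (a c : R) : R := Rpower (a + 2) (a + 2) * Rpower c (2 * (a + 2)).

Lemma left_const_pos a c : 0 < left_const a c.
Proof. apply Rmult_lt_0_compat; apply Rpower_pos. Qed.

(* Below s, the kernel is at most K s^(-a) (t/s)^2: with m = a+2 and
   u = s/(c^2 t) this is u^m e^(-u) <= m^m. *)
Lemma kernel_bound_left a c s t : 0 <= a -> 0 < c -> 0 < s -> 0 < t ->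
  Rpower t (-a) * exp (- s / (c ^ 2 * t)) * s ^ 2 <=
  left_const a c * Rpower s (-a) * t ^ 2.
Proof.
  intros ha hc hs ht.
  assert (hct : 0 < c ^ 2 * t) by (apply Rmult_lt_0_compat; [apply pow_lt |]; lra).
  assert (hsq : forall z, 0 < z -> z ^ 2 = exp (2 * ln z)).
  { intros z hz. replace (2 * ln z) with (ln z + ln z) by ring.
    rewrite exp_plus, exp_ln by exact hz. ring. }
  set (u := s / (c ^ 2 * t)).
  assert (hu : 0 < u) by (now apply Rdiv_lt_0_compat).
  assert (hlnu : ln u = ln s - 2 * ln c - ln t).
  { unfold u. rewrite ln_div, ln_mult by (try apply pow_lt; lra).
    replace (c ^ 2) with (c * c) by ring. rewrite ln_mult by lra. ring. }
  pose proof (log_pow_mul_exp_neg_le (a + 2) u ltac:(lra) hu) as hkey.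
  rewrite hlnu in hkey.
  replace (- s / (c ^ 2 * t)) with (- u) by (unfold u; field; lra).
  rewrite (hsq s), (hsq t) by assumption.
  unfold left_const, Rpower. rewrite <- !exp_plus. apply exp_monotone. lra.
Qed.

Definition power_tail_bound (f : R -> R) (a A b s : R) : Prop :=
  forall t, s <= t -> Rpower t (-a) * f t <= A * f s * Rpower s (b - a) * Rpower t (-b).

(* The constant of the lower estimate, from the interval [r^2, 2 r^2]. *)
Definition lower_const (a c : R) : R := Rpower 2 (- a) * exp (- / c ^ 2) / 4.

Lemma lower_const_pos a c : 0 < lower_const a c.
Proof.
  apply Rdiv_lt_0_compat; [apply Rmult_lt_0_compat; [apply Rpower_pos | apply exp_pos] | lra].
Qed.

Section Estimates.

Variable f : R -> R.
Hypothesis hf_pos : forall t, 0 < t -> 0 < f t.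
Hypothesis hf_noninc : forall s t, 0 < s -> s <= t -> f t <= f s.
Hypothesis hf_t2 : forall s t, 0 < s -> s <= t -> s ^ 2 * f s <= t ^ 2 * f t.
Variables a c : R.
Hypothesis ha : 0 <= a.
Hypothesis hc : 0 < c.

Lemma integrand_ex_RInt r x y : 0 < x -> x <= y -> ex_RInt (integrandA2 f a c r) x y.
Proof.
  intros hx hxy. apply ex_RInt_Reals_1.
  apply (Riemann_integrable_mul_nonincreasing (kernelA2 a c r) f); [exact hxy | | |].
  - intros t ht. apply kernelA2_continuous; lra.
  - intros s t hs hst ht. apply hf_noninc; lra.
  - intros t ht. left; apply hf_pos; lra.
Qed.

Lemma integrand_nonneg r t : 0 < t -> 0 <= integrandA2 f a c r t.
Proof.
  intros ht. rewrite integrandA2_kernel. left.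
  apply Rmult_lt_0_compat; [apply Rmult_lt_0_compat; [apply Rpower_pos | apply exp_pos] |].
  now apply hf_pos.
Qed.

(* Below s = r^2 the integrand is at most K s^(-a) f(s), by the kernel bound
   and t^2 f(t) <= s^2 f(s). *)
Lemma left_piece_bound r x : 0 < r -> 0 < x -> x <= r ^ 2 ->
  RInt (integrandA2 f a c r) x (r ^ 2) <= left_const a c * Rpower (r ^ 2) (1 - a) * f (r ^ 2).
Proof.
  intros hr hx hxs.
  assert (hs : 0 < r ^ 2) by (apply pow_lt; lra).
  set (s := r ^ 2) in *.
  pose proof (left_const_pos a c).
  set (C := left_const a c * Rpower s (- a) * f s).
  assert (hC : 0 <= C).
  { left. unfold C. repeat apply Rmult_lt_0_compat; auto using Rpower_pos. }
  apply Rle_trans with (RInt (fun _ => C) x s).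
  - apply RInt_le; [exact hxs | now apply integrand_ex_RInt | apply ex_RInt_const |].
    intros t ht. assert (htp : 0 < t) by lra.
    pose proof (kernel_bound_left a c s t ha hc hs htp) as hkernel.
    pose proof (hf_t2 t s htp ltac:(lra)) as hgrowth.
    apply Rmult_le_reg_r with (s ^ 2); [now apply pow_lt |].
    apply Rle_trans with (left_const a c * Rpower s (- a) * (t ^ 2 * f t)).
    + unfold integrandA2. fold s.
      replace (Rpower t (- a) * exp (- s / (c ^ 2 * t)) * f t * s ^ 2)
        with ((Rpower t (- a) * exp (- s / (c ^ 2 * t)) * s ^ 2) * f t) by ring.
      replace (left_const a c * Rpower s (- a) * (t ^ 2 * f t))
        with ((left_const a c * Rpower s (- a) * t ^ 2) * f t) by ring.
      apply Rmult_le_compat_r; [left; apply hf_pos |]; lra.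
    + unfold C. replace (left_const a c * Rpower s (- a) * f s * s ^ 2)
        with ((left_const a c * Rpower s (- a)) * (s ^ 2 * f s)) by ring.
      apply Rmult_le_compat_l; [left; apply Rmult_lt_0_compat; auto using Rpower_pos |].
      exact hgrowth.
  - rewrite RInt_const. change (scal (s - x) C) with ((s - x) * C).
    apply Rle_trans with (s * C); [apply Rmult_le_compat_r; lra |].
    unfold C. rewrite <- Rpower_succ by exact hs. right; ring.
Qed.

(* Above s = r^2 the exponential factor is <= 1, so a power tail with
   exponent b > 1 bounds the integral by A/(b-1) s^(1-a) f(s). *)
Lemma right_piece_bound r A b y : 0 < A -> 1 < b -> 0 < r -> r ^ 2 <= y ->
  power_tail_bound f a A b (r ^ 2) ->
  RInt (integrandA2 f a c r) (r ^ 2) y <= A / (b - 1) * Rpower (r ^ 2) (1 - a) * f (r ^ 2).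
Proof.
  intros hA hb hr hy htail.
  assert (hs : 0 < r ^ 2) by (apply pow_lt; lra).
  set (K := A * f (r ^ 2) * Rpower (r ^ 2) (b - a)).
  assert (hK : 0 <= K).
  { left. unfold K. repeat apply Rmult_lt_0_compat; auto using Rpower_pos. }
  assert (hpow : ex_RInt (fun t => Rpower t (-b)) (r ^ 2) y)
    by (eexists; now apply is_RInt_Rpower_neg).
  apply Rle_trans with (RInt (fun t => scal K (Rpower t (-b))) (r ^ 2) y).
  - apply RInt_le; [exact hy | now apply integrand_ex_RInt |
                    now apply (ex_RInt_scal (V := R_NormedModule)) |].
    intros t ht. change (scal K (Rpower t (-b))) with (K * Rpower t (-b)).
    unfold K. rewrite <- (htail t) by lra.
    assert (hexp : exp (- r ^ 2 / (c ^ 2 * t)) <= 1).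
    { rewrite <- exp_0. apply exp_monotone.
      assert (0 <= r ^ 2 / (c ^ 2 * t)); [| unfold Rdiv in *; lra].
      apply Rdiv_le_0_compat; [lra | apply Rmult_lt_0_compat; [apply pow_lt |]; lra]. }
    pose proof (Rpower_pos t (-a)). pose proof (hf_pos t ltac:(lra)).
    unfold integrandA2.
    rewrite <- (Rmult_1_r (Rpower t (-a))) at 2.
    apply Rmult_le_compat_r; [lra |].
    apply Rmult_le_compat_l; lra.
  - rewrite (RInt_scal (V := R_CompleteNormedModule)) by exact hpow.
    change (scal K (RInt (fun t => Rpower t (-b)) (r ^ 2) y))
      with (K * RInt (fun t => Rpower t (-b)) (r ^ 2) y).
    apply Rle_trans with (K * (Rpower (r ^ 2) (1 - b) / (b - 1))).
    + apply Rmult_le_compat_l; [exact hK | now apply RInt_Rpower_neg_le].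
    + replace (Rpower (r ^ 2) (1 - a)) with (Rpower (r ^ 2) (b - a) * Rpower (r ^ 2) (1 - b))
        by (rewrite <- Rpower_plus; f_equal; ring).
      unfold K. right. field. lra.
Qed.

(* On [s,2s] with s = r^2: t^(-a) >= (2s)^(-a), the exponential is at least
   exp(-1/c^2), and f(t) >= f(2s) >= f(s)/4 by the growth of t^2 f(t). *)
Lemma lower_piece_bound r : 0 < r ->
  lower_const a c * Rpower (r ^ 2) (1 - a) * f (r ^ 2) <=
  RInt (integrandA2 f a c r) (r ^ 2) (2 * r ^ 2).
Proof.
  intros hr.
  assert (hs : 0 < r ^ 2) by (apply pow_lt; lra).
  assert (hc2 : 0 < c ^ 2) by (apply pow_lt; lra).
  set (C := Rpower (2 * r ^ 2) (- a) * exp (- / c ^ 2) * (f (r ^ 2) / 4)).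
  assert (hC : 0 <= C).
  { left. unfold C. apply Rmult_lt_0_compat;
      [apply Rmult_lt_0_compat; [apply Rpower_pos | apply exp_pos] |].
    apply Rdiv_lt_0_compat; [auto | lra]. }
  apply Rle_trans with (RInt (fun _ => C) (r ^ 2) (2 * r ^ 2)).
  - rewrite RInt_const. change (scal (2 * r ^ 2 - r ^ 2) C) with ((2 * r ^ 2 - r ^ 2) * C).
    unfold C, lower_const. rewrite <- Rpower_mult_distr, <- Rpower_succ by lra.
    right. field.
  - apply RInt_le; [lra | apply ex_RInt_const | apply integrand_ex_RInt; lra |].
    intros t ht. unfold integrandA2, C. assert (htp : 0 < t) by lra.
    assert (hpow : Rpower (2 * r ^ 2) (- a) <= Rpower t (- a)).
    { rewrite !Rpower_Ropp. apply Rinv_le_contravar; [apply Rpower_pos |].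
      apply Rle_Rpower_l; lra. }
    assert (hexp : exp (- / c ^ 2) <= exp (- r ^ 2 / (c ^ 2 * t))).
    { apply exp_monotone.
      assert (hratio : r ^ 2 * / t <= 1).
      { apply Rmult_le_reg_r with t; [exact htp |].
        rewrite Rmult_assoc, Rinv_l by lra. lra. }
      replace (- r ^ 2 / (c ^ 2 * t)) with (- (/ c ^ 2 * (r ^ 2 * / t)))
        by (field; split; lra).
      apply Ropp_le_contravar. rewrite <- (Rmult_1_r (/ c ^ 2)) at 2.
      apply Rmult_le_compat_l; [left; now apply Rinv_0_lt_compat | exact hratio]. }
    assert (hf : f (r ^ 2) / 4 <= f t).
    { apply Rle_trans with (f (2 * r ^ 2)); [| apply hf_noninc; lra].
      pose proof (hf_t2 (r ^ 2) (2 * r ^ 2) hs ltac:(lra)) as hgrowth.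
      replace ((2 * r ^ 2) ^ 2) with (4 * (r ^ 2) ^ 2) in hgrowth by ring.
      apply Rmult_le_reg_l with ((r ^ 2) ^ 2); [now apply pow_lt |].
      apply Rle_trans with ((r ^ 2) ^ 2 * f (r ^ 2) / 4); [right; field | lra]. }
    apply Rmult_le_compat; [| left; apply Rdiv_lt_0_compat; [apply hf_pos |]; lra | | exact hf].
    + left; apply Rmult_lt_0_compat; [apply Rpower_pos | apply exp_pos].
    + apply Rmult_le_compat; [left; apply Rpower_pos | left; apply exp_pos | |]; assumption.
Qed.

Lemma integral_two_sided_bound r A b : 0 < A -> 1 < b -> 0 < r ->
  power_tail_bound f a A b (r ^ 2) ->
  exists I, improper_integral_0_inf (integrandA2 f a c r) I /\
    lower_const a c * (Rpower r (- 2 * a + 2) * f (r ^ 2)) <= I /\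
    I <= (left_const a c + A / (b - 1)) * (Rpower r (- 2 * a + 2) * f (r ^ 2)).
Proof.
  intros hA hb hr htail.
  assert (hs : 0 < r ^ 2) by (apply pow_lt; lra).
  rewrite <- Rpower_sqr by exact hr.
  destruct (improper_integral_of_bounded_nonneg (integrandA2 f a c r)
     ((left_const a c + A / (b - 1)) * (Rpower (r ^ 2) (1 - a) * f (r ^ 2))))
    as [I [hI [hpartial hIle]]].
  - intros x y hx hxy. now apply integrand_ex_RInt.
  - intros t ht. now apply integrand_nonneg.
  - intros x y hx hxy.
    set (x' := Rmin x (r ^ 2)). set (y' := Rmax y (r ^ 2)).
    assert (hx' : 0 < x') by (apply Rmin_glb_lt; auto).
    assert (hx's : x' <= r ^ 2) by apply Rmin_r.
    assert (hsy' : r ^ 2 <= y') by apply Rmax_r.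
    apply Rle_trans with (RInt (integrandA2 f a c r) x' y').
    { apply RInt_nonneg_subinterval;
        [intros; now apply integrand_ex_RInt | intros; now apply integrand_nonneg |
         exact hx' | apply Rmin_l | exact hxy | apply Rmax_l]. }
    rewrite <- (RInt_Chasles (integrandA2 f a c r) _ (r ^ 2))
      by (apply integrand_ex_RInt; lra).
    change (plus ?u ?v) with (u + v).
    pose proof (left_piece_bound r x' hr hx' hx's).
    pose proof (right_piece_bound r A b y' hA hb hr hsy' htail).
    lra.
  - exists I. split; [exact hI | split; [| exact hIle]].
    pose proof (lower_piece_bound r hr).
    assert (RInt (integrandA2 f a c r) (r ^ 2) (2 * r ^ 2) <= I)
      by (apply hpartial; lra).
    lra.
Qed.

End Estimates.

Lemma power_tail_of_nonincreasing f a s :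
  (forall s t, 0 < s -> s <= t -> f t <= f s) -> 0 < s ->
  power_tail_bound f a 1 a s.
Proof.
  intros hf_noninc hs t hst.
  replace (a - a) with 0 by ring. rewrite Rpower_O by exact hs.
  pose proof (Rpower_pos t (-a)).
  apply Rle_trans with (Rpower t (-a) * f s); [| right; ring].
  apply Rmult_le_compat_l; [lra | now apply hf_noninc].
Qed.

(* For s > R the decay f(s x) / f(s) <= c' x^(-g') (x >= 1) gives the power
   tail with b = a + g' and A = c', by taking x = t / s. *)
Lemma power_tail_of_decay f a c' g' R0 s :
  (forall t, 0 < t -> 0 < f t) ->
  (forall t x, R0 < t -> 1 <= x -> f (t * x) / f t <= c' * Rpower x (- g')) ->
  0 < s -> R0 < s -> power_tail_bound f a c' (a + g') s.
Proof.
  intros hf_pos hdecay hs hRs t hst.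
  assert (ht : 0 < t) by lra.
  assert (hx : 1 <= t / s).
  { apply Rmult_le_reg_r with s; [exact hs |]. field_simplify; lra. }
  pose proof (hdecay s (t / s) hRs hx) as hd.
  replace (s * (t / s)) with t in hd by (field; lra).
  pose proof (hf_pos t ht). pose proof (hf_pos s hs).
  assert (hft : f t <= c' * Rpower (t / s) (- g') * f s).
  { apply Rmult_le_reg_r with (/ f s); [now apply Rinv_0_lt_compat |].
    replace (c' * Rpower (t / s) (- g') * f s * / f s)
      with (c' * Rpower (t / s) (- g')) by (field; lra). exact hd. }
  assert (hpow : Rpower t (-a) * Rpower (t / s) (- g') =
                 Rpower s (a + g' - a) * Rpower t (- (a + g'))).
  { unfold Rpower. rewrite ln_div by lra. rewrite <- !exp_plus. f_equal. ring. }
  apply Rle_trans with (Rpower t (-a) * (c' * Rpower (t / s) (- g') * f s)).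
  - apply Rmult_le_compat_l; [left; apply Rpower_pos | exact hft].
  - replace (Rpower t (-a) * (c' * Rpower (t / s) (- g') * f s))
      with (c' * f s * (Rpower t (-a) * Rpower (t / s) (- g'))) by ring.
    rewrite hpow. right; ring.
Qed.

Theorem lemmaA2 (f : R -> R) (a c R0 : R)
  (hf_pos : forall t, 0 < t -> 0 < f t)
  (hf_noninc : forall s t, 0 < s -> s <= t -> f t <= f s)
  (hf_t2 : forall s t, 0 < s -> s <= t -> s ^ 2 * f s <= t ^ 2 * f t)
  (ha : 0 <= a) (hc : 0 < c) (hR : 0 <= R0)
  (hdecay : a <= 1 ->
     exists c' g', 0 < c' /\ 1 - a < g' /\
       forall t x, R0 < t -> 1 <= x -> f (t * x) / f t <= c' * Rpower x (- g')) :
  exists C1 C2, 0 < C1 /\ 0 < C2 /\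
    forall r, (if Rle_dec a 1 then sqrt R0 else 0) < r ->
      exists I, improper_integral_0_inf (integrandA2 f a c r) I /\
        C1 * (Rpower r (- 2 * a + 2) * f (r ^ 2)) <= I /\
        I <= C2 * (Rpower r (- 2 * a + 2) * f (r ^ 2)).
Proof.
  pose proof (lower_const_pos a c). pose proof (left_const_pos a c).
  destruct (Rle_dec a 1) as [ha1 | ha1].
  - destruct (hdecay ha1) as [c' [g' [hc' [hg' hd]]]].
    exists (lower_const a c), (left_const a c + c' / (a + g' - 1)).
    assert (0 < c' / (a + g' - 1)) by (apply Rdiv_lt_0_compat; lra).
    repeat split; [assumption | lra |].
    intros r hr.
    pose proof (sqrt_pos R0). pose proof (sqrt_sqrt R0 hR).
    assert (hRs : R0 < r ^ 2) by nra.
    apply integral_two_sided_bound; auto; try lra.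
    apply power_tail_of_decay with R0; auto; lra.
  - exists (lower_const a c), (left_const a c + 1 / (a - 1)).
    assert (0 < 1 / (a - 1)) by (apply Rdiv_lt_0_compat; lra).
    repeat split; [assumption | lra |].
    intros r hr.
    apply integral_two_sided_bound; auto; try lra.
    apply power_tail_of_nonincreasing; auto. apply pow_lt; lra.
Qed.
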